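(* Let $\mathcal{Q}=\mathcal{Q}_\ell(T,X,Y)\subseteq\mathcal{P}_\ell(T,X)$. For all $\alpha,\beta\in\mathcal{Q}$, $\alpha\,\sigma^{\mathcal{Q}}\,\beta$ if and only if $\alpha\,\sigma^{\mathcal{P}}\,\beta$, where $\sigma^{\mathcal{P}}$ is the least monoid congruence on $\mathcal{P}_\ell(T,X)$ containing $X\times X$ and $\sigma^{\mathcal{Q}}$ is the least monoid congruence on $\mathcal{Q}$ containing $Y\times Y$.
   Context: Let $T$ be a monoid, $X$ a semilattice with identity $1_X$ (ordered by $e\le f$ iff $ef=e$) with an order-preserving left action of $T$. $\mathcal{P}_\ell(T,X)$: let $T*X$ be the semigroup free product acting on $X$ (elements of $X$ act by multiplication), $\omega^+=\omega\cdot1_X$, $\sim$ the semigroup congruence generated by $\{(\alpha^+\alpha,\alpha)\}\cup\{(1_T,1_X)\}$, and $\mathcal{P}_\ell(T,X)=(T*X)/\sim$ with $[\alpha]^+=[\alpha^+]$; $X$, $T$ are identified with their injective images. It is known to be a left Ehresmann monoid with projections $X$ in which every $\sigma^{\mathcal{P}}$-class contains exactly one element of $T$. Let $Y$ be a subsemilattice of $X$ having an identity, satisfying (A): for all $t\in T$, $e,f\in Y$ with $e\le f$, $t\cdot f\in Y$ implies $t\cdot e\in Y$; (B): for all $t\in T$ there is $g\in Y$ with $t\cdot g\in Y$. $H^{\mathcal{Q}}=\{te:t\in T,e\in Y,t\cdot e\in Y\}$, and $\mathcal{Q}_\ell(T,X,Y)$ is the subsemigroup of $\mathcal{P}_\ell(T,X)$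 generated by $H^{\mathcal{Q}}$; it is a monoid with identity the identity of $Y$. *)

From Stdlib Require Import List.
Import ListNotations.
Set Implicit Arguments.

Record Ops := MkOps {
  tT : Type; tX : Type;
  mulT : tT -> tT -> tT; oneT : tT;
  meet : tX -> tX -> tX; oneX : tX;
  act : tT -> tX -> tX }.

Definition leX (O : Ops) (e f : tX O) : Prop := meet O e f = e.

Definition OpsAxioms (O : Ops) : Prop :=
  (forall a b c, mulT O a (mulT O b c) = mulT O (mulT O a b) c) /\
  (forall a, mulT O (oneT O) a = a) /\ (forall a, mulT O a (oneT O) = a) /\
  (forall e f g, meet O e (meet O f g) = meet O (meet O e f) g) /\
  (forall e f, meet O e f = meet O f e) /\
  (forall e, meet O e e = e) /\
  (forall e, meet O (oneX O) e = e) /\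
  (forall x, act O (oneT O) x = x) /\
  (forall s t x, act O (mulT O s t) x = act O s (act O t x)) /\
  (forall t e f, leX O e f -> leX O (act O t e) (act O t f)).

(** Words over T ⊔ X represent elements of the free semigroup product T*X. *)
Definition word (O : Ops) := list (tT O + tX O).

Definition actw (O : Ops) (w : word O) (x : tX O) : tX O :=
  fold_right (fun l y => match l with inl t => act O t y | inr e => meet O e y end) x w.

Definition plusw (O : Ops) (w : word O) : tX O := actw w (oneX O).

(** The congruence on words whose quotient is P_l(T,X): the free-product relations
    (adjacent letters of one factor are multiplied) together with
    (alpha^+ alpha, alpha) and (1_T, 1_X), closed under the semigroup congruence rules. *)
Inductive simP (O : Ops) : word O -> word O -> Prop :=
| simP_refl w : simP w w
| simP_sym u v : simP u v -> simP v u
| simP_trans u v w : simP u v -> simP v w -> simP u w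
| simP_ctx a b u v : simP u v -> simP (a ++ u ++ b) (a ++ v ++ b)
| simP_mulT s t : simP [inl s; inl t] [inl (mulT O s t)]
| simP_mulX e f : simP [inr e; inr f] [inr (meet O e f)]
| simP_plus w : w <> [] -> simP (inr (plusw w) :: w) w
| simP_one : simP [inl (oneT O)] [inr (oneX O)].

Inductive sigmaP (O : Ops) : word O -> word O -> Prop :=
| sigmaP_sim u v : simP u v -> sigmaP u v
| sigmaP_sym u v : sigmaP u v -> sigmaP v u
| sigmaP_trans u v w : sigmaP u v -> sigmaP v w -> sigmaP u w
| sigmaP_ctx a b u v : sigmaP u v -> sigmaP (a ++ u ++ b) (a ++ v ++ b)
| sigmaP_X e f : sigmaP [inr e] [inr f].

Definition inH (O : Ops) (Y : tX O -> Prop) (w : word O) : Prop :=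
  exists t e, Y e /\ Y (act O t e) /\ w = [inl t; inr e].

(** Membership of (the class of) a word in Q_l(T,X,Y): it is ~-equivalent to a
    nonempty product of elements of H^Q. *)
Definition inQ (O : Ops) (Y : tX O -> Prop) (w : word O) : Prop :=
  exists gs : list (word O), gs <> [] /\ Forall (inH Y) gs /\ simP w (concat gs).

Inductive sigmaQ (O : Ops) (Y : tX O -> Prop) : word O -> word O -> Prop :=
| sigmaQ_sim u v : inQ Y u -> simP u v -> sigmaQ Y u v
| sigmaQ_sym u v : sigmaQ Y u v -> sigmaQ Y v u
| sigmaQ_trans u v w : sigmaQ Y u v -> sigmaQ Y v w -> sigmaQ Y u w
| sigmaQ_mull a u v : inQ Y a -> sigmaQ Y u v -> sigmaQ Y (a ++ u) (a ++ v)
| sigmaQ_mulr a u v : inQ Y a -> sigmaQ Y u v -> sigmaQ Y (u ++ a) (v ++ a)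
| sigmaQ_Y e f : Y e -> Y f -> sigmaQ Y [inr e] [inr f].

(** Hypotheses on Y: subsemilattice with an identity, conditions (A) and (B). *)
Definition YAxioms (O : Ops) (Y : tX O -> Prop) : Prop :=
  (forall e f, Y e -> Y f -> Y (meet O e f)) /\
  (exists iY, Y iY /\ forall f, Y f -> meet O iY f = f) /\
  (forall t e f, Y e -> Y f -> leX O e f -> Y (act O t f) -> Y (act O t e)) /\
  (forall t, exists g, Y g /\ Y (act O t g)).

(* Erasing the letters of X is a monoid morphism from words to T that is constant on
   sigma^P-classes, so sigma^P-related words have the same T-part.  Conversely, inside Q
   every element is sigma^Q-related to a single generator [t e] with t its T-part: two
   generators [t e], [t g] are sigma^Q-related because [t e] ~ [t e e] sigma^Q [t e (e g)]
   ~ [t (e g)], and condition (A) keeps [t (e g)] in H^Q; a product [t e][s f] collapses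
   to [(t s) f'] after shrinking f to f' = f g with g from condition (B) for t s, using
   [s f'] ~ [(s . f') s f'].  Hence sigma^P-related elements of Q share a T-part and are
   sigma^Q-related to sigma^Q-related generators. *)
From Stdlib Require Import List.
Import ListNotations.
Set Implicit Arguments.

Section Words.
Variable O : Ops.

Fixpoint tpart (w : word O) : tT O :=
  match w with
  | [] => oneT O
  | inl t :: w' => mulT O t (tpart w')
  | inr _ :: w' => tpart w'
  end.

Lemma simP_catl (a u v : word O) : simP u v -> simP (a ++ u) (a ++ v).
Proof.
  intro H; pose proof (simP_ctx a [] H) as K; now rewrite !app_nil_r in K.
Qed.

Lemma simP_catr (b u v : word O) : simP u v -> simP (u ++ b) (v ++ b).
Proof. exact (@simP_ctx O [] b u v). Qed.

Lemma sigmaQ_sigmaP (Y : tX O -> Prop) (u v : word O) :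
  sigmaQ Y u v -> sigmaP u v.
Proof.
  induction 1.
  - now apply sigmaP_sim.
  - now apply sigmaP_sym.
  - eapply sigmaP_trans; eassumption.
  - pose proof (sigmaP_ctx a [] IHsigmaQ) as K; now rewrite !app_nil_r in K.
  - exact (sigmaP_ctx [] a IHsigmaQ).
  - apply sigmaP_X.
Qed.

Hypothesis HO : OpsAxioms O.

Lemma tpart_cat (a b : word O) : tpart (a ++ b) = mulT O (tpart a) (tpart b).
Proof.
  destruct HO as (mulTA & mul1T & _).
  induction a as [|[t|e] a IH]; simpl.
  - now rewrite mul1T.
  - now rewrite IH, mulTA.
  - exact IH.
Qed.

Lemma tpart_simP (u v : word O) : simP u v -> tpart u = tpart v.
Proof.
  destruct HO as (_ & _ & mulT1 & _).
  induction 1; simpl; try congruence.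
  now rewrite !tpart_cat, IHsimP.
Qed.

Lemma tpart_sigmaP (u v : word O) : sigmaP u v -> tpart u = tpart v.
Proof.
  induction 1; simpl; try congruence.
  - now apply tpart_simP.
  - now rewrite !tpart_cat, IHsigmaP.
Qed.

Lemma leX_meet_l (e g : tX O) : leX O (meet O e g) e.
Proof.
  destruct HO as (_ & _ & _ & meetA & meetC & meetI & _).
  unfold leX; now rewrite (meetC _ e), meetA, meetI.
Qed.

Lemma leX_meet_r (e g : tX O) : leX O (meet O e g) g.
Proof.
  destruct HO as (_ & _ & _ & meetA & meetC & _).
  rewrite meetC; apply leX_meet_l.
Qed.

Lemma simP_meet_absorb (e g : tX O) :
  simP [inr e; inr (meet O e g)] [inr (meet O e g)].
Proof.
  destruct HO as (_ & _ & _ & meetA & _ & meetI & _).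
  rewrite <- meetI at 3; rewrite <- meetA; apply simP_mulX.
Qed.

Lemma simP_gen_plus (s : tT O) (f : tX O) :
  simP [inr (act O s f); inl s; inr f] [inl s; inr f].
Proof.
  destruct HO as (_ & _ & _ & _ & meetC & _ & meet1X & _).
  replace (act O s f) with (plusw [inl s; inr f]).
  - apply simP_plus; discriminate.
  - unfold plusw, actw; simpl; now rewrite meetC, meet1X.
Qed.

Variable Y : tX O -> Prop.
Hypothesis HY : YAxioms O Y.

Lemma inQ_gen (t : tT O) (e : tX O) : Y e -> Y (act O t e) -> inQ Y [inl t; inr e].
Proof.
  intros He Hte; exists [[inl t; inr e]]; repeat split; try discriminate.
  - repeat constructor; now exists t, e.
  - apply simP_refl.
Qed.

Lemma sigmaQ_simP (u v : word O) : inQ Y v -> simP u v -> sigmaQ Y u v.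
Proof. intros Hv H; apply sigmaQ_sym, sigmaQ_sim; [exact Hv | now apply simP_sym]. Qed.

Lemma Y_act_meet (t : tT O) (e g : tX O) :
  Y e -> Y (act O t e) -> Y g -> Y (act O t (meet O e g)).
Proof.
  destruct HY as (Ymeet & _ & condA & _).
  intros; apply (condA t _ e); auto using leX_meet_l.
Qed.

Lemma sigmaQ_gen_meet (t : tT O) (e g : tX O) : Y e -> Y (act O t e) -> Y g ->
  sigmaQ Y [inl t; inr e] [inl t; inr (meet O e g)].
Proof.
  destruct HO as (_ & _ & _ & _ & _ & meetI & _).
  destruct HY as (Ymeet & _).
  intros He Hte Hg.
  assert (Hgen : inQ Y [inl t; inr e]) by now apply inQ_gen.
  apply sigmaQ_trans with ([inl t; inr e] ++ [inr e]).
  { apply sigmaQ_sim; [exact Hgen |].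
    apply (simP_catl [inl t]); apply simP_sym; rewrite <- (meetI e) at 3.
    apply simP_mulX. }
  apply sigmaQ_trans with ([inl t; inr e] ++ [inr (meet O e g)]).
  { apply sigmaQ_mull; [exact Hgen | apply sigmaQ_Y; auto]. }
  apply sigmaQ_simP.
  - apply inQ_gen; auto using Y_act_meet.
  - apply (simP_catl [inl t]), simP_meet_absorb.
Qed.

Lemma sigmaQ_gen (t : tT O) (e g : tX O) :
  Y e -> Y (act O t e) -> Y g -> Y (act O t g) ->
  sigmaQ Y [inl t; inr e] [inl t; inr g].
Proof.
  destruct HO as (_ & _ & _ & _ & meetC & _).
  intros; apply sigmaQ_trans with [inl t; inr (meet O e g)].
  - now apply sigmaQ_gen_meet.
  - rewrite meetC; apply sigmaQ_sym; now apply sigmaQ_gen_meet.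
Qed.

Lemma sigmaQ_gen_mul (t s : tT O) (e f : tX O) :
  Y e -> Y (act O t e) -> Y f -> Y (act O s f) ->
  exists h, Y h /\ Y (act O (mulT O t s) h) /\
    sigmaQ Y ([inl t; inr e] ++ [inl s; inr f]) [inl (mulT O t s); inr h].
Proof.
  pose proof HO as (_ & _ & _ & _ & _ & _ & _ & _ & act_mul & _).
  destruct HY as (Ymeet & _ & condA & condB).
  intros He Hte Hf Hsf.
  destruct (condB (mulT O t s)) as (g & Hg & Htsg).
  set (f' := meet O f g).
  assert (Hf' : Y f') by now apply Ymeet.
  assert (Hsf' : Y (act O s f')) by now apply Y_act_meet.
  assert (Htsf' : Y (act O (mulT O t s) f'))
    by (apply (condA _ f' g); auto; apply leX_meet_r).
  assert (Htsf'' : Y (act O t (act O s f'))) by now rewrite <- act_mul.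
  exists f'; repeat split; auto.
  apply sigmaQ_trans with ([inl t; inr e] ++ [inl s; inr f']).
  { apply sigmaQ_mull; [now apply inQ_gen | now apply sigmaQ_gen]. }
  apply sigmaQ_trans with ([inl t; inr (act O s f')] ++ [inl s; inr f']).
  { apply sigmaQ_mulr; [now apply inQ_gen | now apply sigmaQ_gen]. }
  apply sigmaQ_simP; [now apply inQ_gen |].
  apply simP_trans with [inl t; inl s; inr f'].
  - apply (simP_catl [inl t]), simP_gen_plus.
  - apply (simP_catr [inr f'] (u := [inl t; inl s]) (v := [inl (mulT O t s)])).
    apply simP_mulT.
Qed.

Lemma sigmaQ_concat_gen (gs : list (word O)) : gs <> [] -> Forall (inH Y) gs ->
  exists h, Y h /\ Y (act O (tpart (concat gs)) h) /\
    sigmaQ Y (concat gs) [inl (tpart (concat gs)); inr h].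
Proof.
  destruct HO as (_ & _ & mulT1 & _).
  induction gs as [|g gs IH]; intros Hne Hgs; [congruence |].
  inversion Hgs as [|? ? (t & e & He & Hte & ->) Hgs']; subst.
  destruct gs as [|g' gs].
  - exists e; simpl; rewrite mulT1; repeat split; auto.
    apply sigmaQ_sim; [now apply inQ_gen | apply simP_refl].
  - destruct IH as (f & Hf & Hsf & IHsig); [discriminate | exact Hgs' |].
    destruct (sigmaQ_gen_mul t _ He Hte Hf Hsf) as (h & Hh & Htsh & Hsig).
    change (concat ([inl t; inr e] :: g' :: gs))
      with ([inl t; inr e] ++ concat (g' :: gs)).
    rewrite tpart_cat; simpl tpart; rewrite mulT1.
    exists h; repeat split; auto.
    apply sigmaQ_trans with (2 := Hsig).
    apply sigmaQ_mull; [now apply inQ_gen | exact IHsig].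
Qed.

Lemma inQ_sigmaQ_gen (a : word O) : inQ Y a ->
  exists h, Y h /\ Y (act O (tpart a) h) /\ sigmaQ Y a [inl (tpart a); inr h].
Proof.
  intros Ha; pose proof Ha as (gs & Hne & Hgs & Hsim).
  rewrite (tpart_simP Hsim).
  destruct (sigmaQ_concat_gen Hne Hgs) as (h & Hh & Hah & Hsig).
  exists h; repeat split; auto.
  apply sigmaQ_trans with (2 := Hsig); now apply sigmaQ_sim.
Qed.

End Words.

Theorem mainTheorem17 (O : Ops) (Y : tX O -> Prop)
  (HO : OpsAxioms O) (HY : YAxioms O Y) :
  forall alpha beta : word O, inQ Y alpha -> inQ Y beta ->
    (sigmaQ Y alpha beta <-> sigmaP alpha beta).
Proof.
  intros a b Ha Hb; split; [apply sigmaQ_sigmaP |].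
  intro Hab.
  destruct (inQ_sigmaQ_gen HO HY Ha) as (h & Hh & Hah & Ha').
  destruct (inQ_sigmaQ_gen HO HY Hb) as (h' & Hh' & Hbh' & Hb').
  rewrite <- (tpart_sigmaP HO Hab) in Hbh', Hb'.
  apply sigmaQ_trans with (1 := Ha'), sigmaQ_trans with (2 := sigmaQ_sym Hb').
  now apply (sigmaQ_gen HO HY).
Qed.
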